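(* Let $f:\mathbb{R}\to\mathbb{R}$ be given by $f(t):=\sum_{n=1}^\infty\frac1n\sin^2(t/2^n)$. Then $f$ is not quasi-asymptotically almost periodic; that is, it is false that for every $\epsilon>0$ there is $l>0$ such that every interval of length $l$ contains a number $\tau$ for which there exists $M(\epsilon,\tau)>0$ with $|f(t+\tau)-f(t)|\le\epsilon$ for all $|t|\ge M(\epsilon,\tau)$.
   Context: Known facts (may be used): $f$ is well defined, uniformly continuous, unbounded, and for each $\tau\in\mathbb{R}$ the function $t\mapsto f(t+\tau)-f(t)$ is (Bohr) almost periodic. *)

From Stdlib Require Import Reals.
From Coquelicot Require Import Coquelicot.
Open Scope R_scope.

(* f(t) = sum_{n>=1} (1/n) sin^2(t/2^n); reindexed with k = n-1 >= 0. *)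
Definition f_ex (t : R) : R :=
  Series (fun k : nat => / INR (S k) * (sin (t / 2 ^ (S k))) ^ 2).

Definition quasi_asymptotically_almost_periodic (g : R -> R) : Prop :=
  forall eps : R, eps > 0 ->
  exists l : R, l > 0 /\
    forall a : R, exists tau : R, a <= tau <= a + l /\
      exists M : R, M > 0 /\
        forall t : R, Rabs t >= M -> Rabs (g (t + tau) - g t) <= eps.

From Stdlib Require Import Reals Lra Lia.
From Coquelicot Require Import Coquelicot.
Open Scope R_scope.

(* Write f = sum_k T_k with T_k(x) = sin^2(x/2^(k+1)) / (k+1).
   - Size near 0: |T_k(x)| <= x^2 (1/2)^k, hence 0 <= f(x) <= 2 x^2.
   - Unboundedness: at x = 2^(n+1) pi / 3 the first n+1 terms all equal
     (3/4)/(k+1), because sin^2 of 2^m pi/3 is always 3/4, so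
     f(x) >= (3/4) H_(n+1) >= (3/4) ln (n+2).
   - Almost invariance under P = 2^N pi: the terms with k < N do not change,
     and the remaining ones change by at most (pi/2)(1/2)^(k-N), so
     |f(x + 2^N pi) - f(x)| <= pi for every x.
   Given eps = 1 and the inclusion length l, take s with f(s) huge and tau in
   [-s, -s + l].  For N large, t = s + 2^N pi satisfies |t| >= M, but
   f(t + tau) is within pi of f(s + tau) <= 2 l^2, while f(t) is within pi of
   f(s): the difference f(t + tau) - f(t) cannot be bounded by 1. *)

Lemma Rabs_sin_le (y : R) : Rabs (sin y) <= Rabs y.
Proof.
  assert (Hpos : forall z, 0 < z -> Rabs (sin z) <= z).
  { intros z Hz. pose proof (sin_lt_x z Hz). pose proof (SIN_bound z).
    destruct (Rle_lt_dec 1 z).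
    - apply Rabs_le; lra.
    - assert (0 <= sin z)
        by (apply sin_ge_0; pose proof PI2_1; pose proof PI2_Rlt_PI; lra).
      rewrite Rabs_right; lra. }
  destruct (Rtotal_order y 0) as [Hy | [Hy | Hy]].
  - rewrite <- (Ropp_involutive y), sin_neg, !Rabs_Ropp, (Rabs_left y) by lra.
    apply Hpos; lra.
  - subst. rewrite sin_0. lra.
  - rewrite (Rabs_right y) by lra. now apply Hpos.
Qed.

Lemma sin_sq_le (y : R) : sin y ^ 2 <= y ^ 2.
Proof.
  rewrite <- (pow2_abs (sin y)), <- (pow2_abs y).
  apply pow_incr. split; [apply Rabs_pos | apply Rabs_sin_le].
Qed.

Lemma sin_sq_sub (u v : R) : sin u ^ 2 - sin v ^ 2 = sin (u + v) * sin (u - v).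
Proof.
  rewrite sin_plus, sin_minus.
  pose proof (sin2_cos2 u). pose proof (sin2_cos2 v). unfold Rsqr in *. nra.
Qed.

Lemma sin_INR_mult_PI (m : nat) : sin (INR m * PI) = 0.
Proof.
  apply sin_eq_0_1. exists (Z.of_nat m). now rewrite <- INR_IZR_INZ.
Qed.

(* 3/4 is a fixed point of s |-> 4 s (1 - s), the doubling map for sin^2. *)
Lemma sin_sq_double_3_4 (y : R) : sin y ^ 2 = 3 / 4 -> sin (2 * y) ^ 2 = 3 / 4.
Proof.
  intros Hy. rewrite sin_2a. pose proof (sin2_cos2 y). unfold Rsqr in *.
  replace ((2 * sin y * cos y) ^ 2) with (4 * sin y ^ 2 * (cos y * cos y)) by ring.
  rewrite Hy. simpl in Hy. nra.
Qed.

Lemma sin_sq_pow2_PI3 (m : nat) : sin (2 ^ m * PI / 3) ^ 2 = 3 / 4.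
Proof.
  induction m as [| m IH].
  - replace (2 ^ 0 * PI / 3) with (PI / 3) by (simpl; field). rewrite sin_PI3.
    replace ((sqrt 3 / 2) ^ 2) with (sqrt 3 * sqrt 3 / 4) by field.
    rewrite sqrt_sqrt; lra.
  - replace (2 ^ S m * PI / 3) with (2 * (2 ^ m * PI / 3)) by (simpl; field).
    now apply sin_sq_double_3_4.
Qed.

Lemma Series_nonneg (a : nat -> R) :
  (forall k, 0 <= a k) -> ex_series a -> 0 <= Series a.
Proof.
  intros Ha Hex.
  replace 0 with (Series (fun _ : nat => 0 * 1))
    by (rewrite Series_scal_l; ring).
  apply Series_le; [intros k; rewrite Rmult_0_l; split; [lra | apply Ha] | exact Hex].
Qed.

Lemma half_pow_bounds (k : nat) : 0 < (/ 2) ^ k <= 1.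
Proof.
  split; [apply pow_lt; lra |].
  rewrite <- (pow1 k). apply pow_incr; lra.
Qed.

Lemma ex_series_geom_half (c : R) : ex_series (fun k => c * (/ 2) ^ k).
Proof.
  apply (ex_series_scal_l c (fun k => (/ 2) ^ k)).
  apply ex_series_geom. rewrite Rabs_right; lra.
Qed.

Lemma Series_dominated_geom (a : nat -> R) (c : R) :
  (forall k, Rabs (a k) <= c * (/ 2) ^ k) ->
  ex_series a /\ Rabs (Series a) <= 2 * c.
Proof.
  intros Ha.
  assert (Habs : ex_series (fun k => Rabs (a k))).
  { apply (ex_series_le (fun k => Rabs (a k)) (fun k => c * (/ 2) ^ k));
      [| apply ex_series_geom_half].
    intros k. unfold norm; simpl; unfold abs; simpl.
    rewrite Rabs_Rabsolu. apply Ha. }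
  split; [now apply ex_series_Rabs |].
  eapply Rle_trans; [now apply Series_Rabs |].
  replace (2 * c) with (Series (fun k => c * (/ 2) ^ k)).
  - apply Series_le; [| apply ex_series_geom_half].
    intros k. split; [apply Rabs_pos | apply Ha].
  - rewrite Series_scal_l, Series_geom by (rewrite Rabs_right; lra). field.
Qed.

(* ln (1 + y) < y for y > 0, via exp y > 1 + y. *)
Lemma ln_1p_lt (y : R) : 0 < y -> ln (1 + y) < y.
Proof.
  intros Hy. rewrite <- (ln_exp y) at 2.
  apply ln_increasing; [lra | apply exp_ineq1; lra].
Qed.

Lemma harmonic_ge_ln (n : nat) : ln (INR n + 2) <= sum_f_R0 (fun k => / INR (S k)) n.
Proof.
  induction n as [| n IH].
  - simpl. replace (0 + 2) with (1 + 1) by ring. pose proof (ln_1p_lt 1). lra.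
  - rewrite tech5. pose proof (pos_INR n).
    replace (INR (S n) + 2) with ((INR n + 2) * (1 + / (INR n + 2)))
      by (rewrite S_INR; field; lra).
    assert (0 < / (INR n + 2)) by (apply Rinv_0_lt_compat; lra).
    rewrite ln_mult by lra.
    replace (INR (S (S n))) with (INR n + 2) by (rewrite !S_INR; ring).
    pose proof (ln_1p_lt (/ (INR n + 2))). lra.
Qed.

Definition f_term (x : R) (k : nat) : R := / INR (S k) * sin (x / 2 ^ S k) ^ 2.

Lemma inv_INR_S_bounds (k : nat) : 0 < / INR (S k) <= 1.
Proof.
  pose proof (pos_INR k). rewrite S_INR. split.
  - apply Rinv_0_lt_compat; lra.
  - rewrite <- Rinv_1. apply Rinv_le_contravar; lra.
Qed.

Lemma f_term_bounds (x : R) (k : nat) : 0 <= f_term x k <= x ^ 2 * (/ 2) ^ k.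
Proof.
  unfold f_term. pose proof (inv_INR_S_bounds k). pose proof (half_pow_bounds k).
  pose proof (sin_sq_le (x / 2 ^ S k)). pose proof (pow2_ge_0 (sin (x / 2 ^ S k))).
  pose proof (pow2_ge_0 x).
  assert (Hsq : (x / 2 ^ S k) ^ 2 <= x ^ 2 * (/ 2) ^ k).
  { replace ((x / 2 ^ S k) ^ 2) with (x ^ 2 * ((/ 2) ^ k * (/ 2) ^ k / 4))
      by (rewrite pow_inv; simpl; field; apply pow_nonzero; lra).
    apply Rmult_le_compat_l; nra. }
  split; nra.
Qed.

Lemma f_term_summable (x : R) :
  ex_series (f_term x) /\ Rabs (f_ex x) <= 2 * x ^ 2.
Proof.
  apply Series_dominated_geom. intros k. pose proof (f_term_bounds x k).
  rewrite Rabs_right; lra.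
Qed.

Lemma f_ex_bounds (x : R) : 0 <= f_ex x <= 2 * x ^ 2.
Proof.
  destruct (f_term_summable x) as [Hex Hle]. split.
  - apply Series_nonneg; [intros k; apply f_term_bounds | exact Hex].
  - apply Rabs_le_between in Hle. lra.
Qed.

Lemma f_term_at_pow2_PI3 (n k : nat) :
  (k <= n)%nat -> f_term (2 ^ S n * PI / 3) k = 3 / 4 * / INR (S k).
Proof.
  intros Hk. unfold f_term.
  replace (2 ^ S n * PI / 3 / 2 ^ S k) with (2 ^ (n - k) * PI / 3).
  - rewrite sin_sq_pow2_PI3. ring.
  - replace (S n) with (S k + (n - k))%nat by lia. rewrite pow_add.
    field. apply pow_nonzero. lra.
Qed.

Lemma f_ex_ge_harmonic (n : nat) :
  3 / 4 * sum_f_R0 (fun k => / INR (S k)) n <= f_ex (2 ^ S n * PI / 3).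
Proof.
  set (x := 2 ^ S n * PI / 3). destruct (f_term_summable x) as [Hex _].
  unfold f_ex. fold (f_term x).
  rewrite (Series_incr_n (f_term x) (S n)) by (lia || exact Hex).
  assert (Htail : 0 <= Series (fun k => f_term x (S n + k))).
  { apply Series_nonneg; [intros k; apply f_term_bounds |].
    now apply (ex_series_incr_n (f_term x) (S n)). }
  simpl Init.Nat.pred.
  rewrite scal_sum, (sum_eq _ (f_term x)); [lra |].
  intros k Hk. unfold x. rewrite f_term_at_pow2_PI3 by lia. ring.
Qed.

Lemma f_ex_unbounded (B : R) : exists x, B < f_ex x.
Proof.
  destruct (INR_unbounded (exp (4 / 3 * B))) as [n Hn].
  exists (2 ^ S n * PI / 3).
  pose proof (f_ex_ge_harmonic n). pose proof (harmonic_ge_ln n).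
  assert (4 / 3 * B < ln (INR n + 2)).
  { rewrite <- (ln_exp (4 / 3 * B)) at 1.
    apply ln_increasing; [apply exp_pos | lra]. }
  lra.
Qed.

Lemma f_term_shift_le (x P : R) (k : nat) :
  Rabs (f_term (x + P) k - f_term x k) <= Rabs (sin (P / 2 ^ S k)).
Proof.
  unfold f_term. rewrite <- Rmult_minus_distr_l, sin_sq_sub, !Rabs_mult.
  replace ((x + P) / 2 ^ S k - x / 2 ^ S k) with (P / 2 ^ S k)
    by (field; apply pow_nonzero; lra).
  pose proof (inv_INR_S_bounds k).
  rewrite (Rabs_right (/ INR (S k))) by lra.
  assert (Hs : Rabs (sin ((x + P) / 2 ^ S k + x / 2 ^ S k)) <= 1)
    by (apply Rabs_le, SIN_bound).
  pose proof (Rabs_pos (sin ((x + P) / 2 ^ S k + x / 2 ^ S k))).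
  pose proof (Rabs_pos (sin (P / 2 ^ S k))).
  assert (/ INR (S k) * Rabs (sin ((x + P) / 2 ^ S k + x / 2 ^ S k)) <= 1) by nra.
  nra.
Qed.

Lemma f_term_shift_head (x : R) (N k : nat) :
  (k < N)%nat -> f_term (x + 2 ^ N * PI) k = f_term x k.
Proof.
  intros Hk.
  assert (Hs : sin (2 ^ N * PI / 2 ^ S k) = 0).
  { replace (2 ^ N * PI / 2 ^ S k) with (INR (2 ^ (N - S k)) * PI);
      [apply sin_INR_mult_PI |].
    rewrite pow_INR. replace (INR 2) with 2 by (simpl; ring).
    replace N with (S k + (N - S k))%nat at 2 by lia. rewrite pow_add.
    field. apply pow_nonzero. lra. }
  pose proof (f_term_shift_le x (2 ^ N * PI) k) as Hle.
  rewrite Hs, Rabs_R0 in Hle.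
  pose proof (Rabs_pos (f_term (x + 2 ^ N * PI) k - f_term x k)).
  apply Rminus_diag_uniq, Rabs_eq_0. lra.
Qed.

Lemma f_term_shift_tail (x : R) (N k : nat) :
  Rabs (f_term (x + 2 ^ N * PI) (N + k) - f_term x (N + k)) <= PI / 2 * (/ 2) ^ k.
Proof.
  eapply Rle_trans; [apply f_term_shift_le |].
  replace (2 ^ N * PI / 2 ^ S (N + k)) with (PI / 2 * (/ 2) ^ k).
  - eapply Rle_trans; [apply Rabs_sin_le |].
    pose proof (half_pow_bounds k). pose proof PI_RGT_0.
    rewrite Rabs_right; nra.
  - replace (S (N + k)) with (N + S k)%nat by lia. rewrite pow_add, pow_inv.
    simpl. field. split; apply pow_nonzero; lra.
Qed.

Lemma f_ex_shift_pow2_PI (x : R) (N : nat) :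
  Rabs (f_ex (x + 2 ^ N * PI) - f_ex x) <= PI.
Proof.
  unfold f_ex. fold (f_term (x + 2 ^ N * PI)) (f_term x).
  rewrite <- Series_minus by apply f_term_summable.
  rewrite (Series_incr_n_aux _ N).
  - apply Rle_trans with (2 * (PI / 2)); [| lra].
    apply (Series_dominated_geom _ (PI / 2)). apply f_term_shift_tail.
  - intros k Hk. rewrite f_term_shift_head by exact Hk. ring.
Qed.

Lemma INR_le_pow2 (N : nat) : INR N <= 2 ^ N.
Proof.
  induction N as [| N IH]; [simpl; lra |].
  rewrite S_INR. simpl. pose proof (pow_R1_Rle 2 N ltac:(lra)). lra.
Qed.

Lemma far_pow2_PI_shift (s M : R) : exists N : nat, M <= Rabs (s + 2 ^ N * PI).
Proof.
  destruct (INR_unbounded (M + Rabs s)) as [N HN]. exists N.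
  pose proof (INR_le_pow2 N). pose proof PI2_1. pose proof (pow_le 2 N ltac:(lra)).
  pose proof (Rabs_triang_inv (2 ^ N * PI) (- s)) as Htri.
  rewrite Rabs_Ropp, (Rabs_right (2 ^ N * PI)) in Htri by nra.
  replace (2 ^ N * PI - - s) with (s + 2 ^ N * PI) in Htri by ring.
  nra.
Qed.

Theorem mainTheorem5 : ~ quasi_asymptotically_almost_periodic f_ex.
Proof.
  intros Hqaap. destruct (Hqaap 1 ltac:(lra)) as [l [Hl Hincl]].
  destruct (f_ex_unbounded (2 * l ^ 2 + 2 * PI + 1)) as [s Hs].
  destruct (Hincl (- s)) as [tau [Htau [M [HM Hclose]]]].
  destruct (far_pow2_PI_shift s M) as [N HN].
  specialize (Hclose (s + 2 ^ N * PI) ltac:(lra)).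
  replace (s + 2 ^ N * PI + tau) with (s + tau + 2 ^ N * PI) in Hclose by ring.
  (* f(s + tau) is small since |s + tau| <= l, while f(s) is huge. *)
  pose proof (f_ex_bounds (s + tau)) as Hsmall.
  assert ((s + tau) ^ 2 <= l ^ 2) by (apply pow_incr; lra).
  pose proof (f_ex_shift_pow2_PI (s + tau) N) as Hshift1.
  pose proof (f_ex_shift_pow2_PI s N) as Hshift2.
  apply Rabs_le_between in Hclose, Hshift1, Hshift2.
  lra.
Qed.
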